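(* Let $(B_k,\delta_k)_{k\ge1}$ be a sequence with $\delta_k\in(0,1/4)$, $B_k\ge1$ and $B_k/\log(\delta_k^{-1})\to\infty$. Then \[ d_{B_k;\delta_k}(e^{-x})\ge\big(\tfrac12+o(1)\big)\sqrt{B_k\log\big((2\delta_k)^{-1}\big)}\qquad(k\to\infty). \]
   Context: For real $B\ge1$, $\delta\in(0,1)$ and a function $f:[0,B]\to\mathbb{R}$, $d_{B;\delta}(f)$ denotes the minimum degree of a non-constant real polynomial $p$ satisfying $\sup_{x\in[0,B]}|p(x)-f(x)|<\delta$. Logarithms are natural. *)

From HB Require Import structures.
From mathcomp Require Import all_boot all_order all_algebra.
From mathcomp Require Import all_classical all_reals all_analysis.
Set Implicit Arguments. Unset Strict Implicit. Unset Printing Implicit Defensive.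
Import Order.TTheory GRing.Theory Num.Theory.
Local Open Scope classical_set_scope.
Local Open Scope ring_scope.

(* p approximates f on [0,B] with sup_{x in [0,B]} |p(x) - f(x)| < delta.
   "sup < delta" is written out as: some eta < delta bounds |p - f| on [0,B]. *)
Definition approx_on (R : realType) (B delta : R) (f : R -> R) (p : {poly R}) : Prop :=
  exists2 eta : R, eta < delta &
    forall x : R, 0 <= x <= B -> `|p.[x] - f x| <= eta.

Definition approx_degrees (R : realType) (B delta : R) (f : R -> R) : set R :=
  [set (n%:R : R) | n in [set n : nat | exists p : {poly R},
     (1 < size p)%N /\ (size p).-1 = n /\ approx_on B delta f p]].

Definition dmin (R : realType) (B delta : R) (f : R -> R) : R :=
  inf (approx_degrees B delta f).

(* If p approximates e^{-x} within delta on [0,B], then Q := p - delta/4 is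
   small on [s,B], s = ln(2/delta), where e^{-x} <= delta/2, but Q(0) is close
   to 1.  Mapping [s,B] affinely onto [-1,1] sends 0 to y = (B+s)/(B-s) > 1,
   and the extremal growth of Chebyshev polynomials, |Q(y)| <= T_n(y) max
   |Q| on [-1,1], forces T_n(y) >~ 1/delta.  With y = (u + 1/u)/2,
   u = (1+r)/(1-r) and r = sqrt(s/B), this reads n ln u >= ln(1/delta), so
   n >= (1 - r) ln(1/delta) / (2r) ~ sqrt(B ln(1/(2 delta)))/2 as r -> 0.
   The Chebyshev bound comes from Lagrange interpolation at the nodes
   cos(k pi/n): at points y >= 1 the Lagrange basis polynomials alternate in
   sign exactly as T_n does at the nodes. *)

From HB Require Import structures.
From mathcomp Require Import all_boot all_order all_algebra.
From mathcomp Require Import all_classical all_reals all_analysis.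
From mathcomp Require Import ring lra zify.

Set Implicit Arguments.
Unset Strict Implicit.
Unset Printing Implicit Defensive.
Import Order.TTheory GRing.Theory Num.Theory.
Local Open Scope classical_set_scope.
Local Open Scope ring_scope.

Fixpoint cheb {R : nzRingType} (n : nat) : {poly R} :=
  match n with
  | 0%N => 1
  | 1%N => 'X
  | (m.+1 as k).+1 => 2%:P * 'X * cheb k - cheb m
  end.

Lemma cheb_ind (P : nat -> Prop) : P 0%N -> P 1%N ->
  (forall n, P n -> P n.+1 -> P n.+2) -> forall n, P n.
Proof.
move=> P0 P1 PS n; suff: P n /\ P n.+1 by case.
by elim: n => [|n [Pn Pn1]]; split => //; apply: PS.
Qed.

Lemma chebSS (R : nzRingType) n :
  cheb n.+2 = 2%:P * 'X * cheb n.+1 - cheb n :> {poly R}.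
Proof. by []. Qed.

Lemma size_cheb (R : nzRingType) n : (size (cheb n : {poly R}) <= n.+1)%N.
Proof.
elim/cheb_ind: n => [|| n le1 le2]; first by rewrite /= size_poly1.
  by rewrite size_polyX.
rewrite chebSS (leq_trans (size_polyD _ _)) // size_polyN geq_max.
apply/andP; split; last by lia.
have sX : (size (2%:P * 'X : {poly R})%R <= 2)%N.
  rewrite (leq_trans (size_polyMleq _ _)) // size_polyX addn2 /=.
  exact: size_polyC_leq1.
by rewrite (leq_trans (size_polyMleq _ _)) //; lia.
Qed.

Lemma horner_cheb_cos (R : realType) n (t : R) : (cheb n).[cos t] = cos (n%:R * t).
Proof.
elim/cheb_ind: n => [|| n IH1 IH2]; first by rewrite hornerC mul0r cos0.
  by rewrite hornerX mul1r.
rewrite chebSS !hornerE IH1 IH2.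
have -> : n.+2%:R * t = n.+1%:R * t + t by rewrite -addn1 natrD; ring.
have -> : n%:R * t = n.+1%:R * t - t by rewrite -addn1 natrD; ring.
by rewrite !cosD cosN sinN; ring.
Qed.

Lemma horner_cheb_half (R : numFieldType) n (u : R) : u != 0 ->
  (cheb n).[(u + u^-1) / 2] = (u ^+ n + u ^- n) / 2.
Proof.
move=> u0; elim/cheb_ind: n => [|| n IH1 IH2].
- by rewrite /= hornerC expr0 invr1 -[1 + 1]/(2 : R) divff // pnatr_eq0.
- by rewrite hornerX expr1.
rewrite chebSS hornerD hornerN !hornerM hornerC hornerX IH1 IH2 !exprS !invfM.
have un0 := expf_neq0 n u0; move: (u ^+ n) un0 => w w0.
by field; rewrite w0 u0.
Qed.

Lemma prod_sign_alternating (R : realDomainType) m (i : 'I_m) (f : 'I_m -> R) :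
  (forall j : 'I_m, (j < i)%N -> f j < 0) -> (forall j : 'I_m, (i < j)%N -> 0 < f j) ->
  0 < (-1) ^+ i * \prod_(j < m | j != i) f j.
Proof.
move=> fneg fpos.
rewrite (bigID (fun j : 'I_m => (j < i)%N)) /= mulrA.
have -> : \prod_(j < m | (j != i) && (j < i)%N) f j = \prod_(j < m | (j < i)%N) f j.
  by apply: eq_bigl => j; rewrite andb_idl // => /ltn_eqF; rewrite -val_eqE => ->.
rewrite (big_ord_narrow (ltnW (ltn_ord i))); apply: mulr_gt0.
  rewrite -[X in _ ^+ X](card_ord i) -prodrN.
  by apply: prodr_gt0 => j _; rewrite oppr_gt0 fneg //= ltn_ord.
apply: prodr_gt0 => j /andP [ji /negbTE ij]; apply: fpos.
by rewrite ltn_neqAle leqNgt ij andbT eq_sym.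
Qed.

Lemma horner_lagrange (K : fieldType) n (x : nat -> K) (i : 'I_n) z :
  (0 < n)%N -> injective x ->
  (tnth (n.-lagrange x) i).[z] =
    (\prod_(j < n | j != i) (x i - x j))^-1 * \prod_(j < n | j != i) (z - x j).
Proof.
move=> n0 xinj; rewrite lagrangeE // /= hornerCM !horner_prod.
by congr (_^-1 * _); apply: eq_bigr => j _; rewrite hornerXsubC.
Qed.

Definition cheb_node {R : realType} n k : R := cos (k%:R * pi / n%:R).

Lemma cheb_node_lt (R : realType) n k k' :
  (k < k')%N -> (k' <= n)%N -> cheb_node n k' < cheb_node n k :> R.
Proof.
move=> kk' k'n; have n0 : (0 : R) < n%:R by rewrite ltr0n; lia.
have ge0 j : (j <= n)%N -> 0 <= j%:R * pi / n%:R <= (pi : R).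
  move=> jn; rewrite divr_ge0 ?mulr_ge0 ?pi_ge0 ?ler0n //=.
  by rewrite ler_pdivrMr // mulrC ler_pM2l ?pi_gt0 // ler_nat.
rewrite /cheb_node ltr_cos ?in_itv ?ge0 //=; last lia.
by rewrite ltr_pM2r ?invr_gt0 // ltr_pM2r ?pi_gt0 // ltr_nat.
Qed.

Lemma horner_cheb_node (R : realType) n k :
  (0 < n)%N -> (cheb n).[cheb_node n k] = (-1) ^+ k :> R.
Proof.
move=> n0; rewrite horner_cheb_cos.
have -> : n%:R * (k%:R * pi / n%:R) = 0 + (pi : R) *+ k.
  by rewrite add0r -mulr_natl; field; rewrite pnatr_eq0 -lt0n.
by rewrite (alternatingn (@cosDpi R)) cos0 mulr1.
Qed.

(* The library's Lagrange basis wants sample points injective on all of nat;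
   only the nodes k <= n are ever used. *)
Definition cheb_sample {R : realType} n k : R :=
  if (k <= n)%N then cheb_node n k else k%:R + 2.

Lemma cheb_sample_inj (R : realType) n : injective (@cheb_sample R n).
Proof.
have node_lt_far j j' : cheb_node n j < j'%:R + 2 :> R.
  by apply: (le_lt_trans (cos_le1 _)); have := ler0n R j'; lra.
move=> a b; rewrite /cheb_sample.
case: (leqP a n) => an; case: (leqP b n) => bn ab.
- case: (ltngtP a b) => // lt; move/eqP: ab.
    by rewrite gt_eqF // cheb_node_lt.
  by rewrite lt_eqF // cheb_node_lt.
- by have := node_lt_far a b; rewrite ab ltxx.
- by have := node_lt_far b a; rewrite ab ltxx.
- by move/addIr/eqP: ab; rewrite eqr_nat => /eqP.
Qed.

Lemma cheb_growth (R : realType) n (Q : {poly R}) (M y : R) :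
  (0 < n)%N -> (size Q <= n.+1)%N ->
  (forall t, -1 <= t <= 1 -> `|Q.[t]| <= M) -> 1 <= y ->
  `|Q.[y]| <= M * (cheb n).[y].
Proof.
move=> n0 sQ QM y1.
have xinj := @cheb_sample_inj R n.
pose L := tnth (n.+1.-lagrange (@cheb_sample R n)).
have sample_node (j : 'I_n.+1) : cheb_sample n j = cheb_node n j :> R.
  by rewrite /cheb_sample -ltnS ltn_ord.
have weight_ge0 (i : 'I_n.+1) : 0 <= (-1) ^+ i * (L i).[y].
  rewrite horner_lagrange // mulrA -invr_sign -invfM.
  apply: mulr_ge0; last first.
    by apply: prodr_ge0 => j _; rewrite sample_node subr_ge0 (le_trans (cos_le1 _)).
  rewrite invr_ge0 ltW //.
  under eq_bigr do rewrite !sample_node.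
  by apply: prod_sign_alternating => j ji;
    rewrite ?subr_lt0 ?subr_gt0 cheb_node_lt // -ltnS ltn_ord.
have chebE : (cheb n).[y] = (\sum_(i < n.+1) ((cheb n).[cheb_sample n i])%:P * L i).[y].
  congr (_.[_]); exact (lagrange_gen (ltn0Sn n) xinj (size_cheb R n)).
rewrite chebE (lagrange_gen _ xinj sQ) // !horner_sum mulr_sumr.
apply: (le_trans (ler_norm_sum _ _ _)); apply: ler_sum => i _.
rewrite !hornerCM sample_node horner_cheb_node // mulrA normrM.
have -> : `|(L i).[y]| = (-1) ^+ i * (L i).[y].
  by rewrite -(ger0_norm (weight_ge0 i)) normrM normr_sign mul1r.
by rewrite -mulrA ler_wpM2r // QM // cos_geN1 cos_le1.
Qed.

Lemma exp_approx_rescaled (R : realType) (B s c eta : R) (p : {poly R}) :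
  0 < s < B -> expR (- s) <= 2 * c -> (0 < size p)%N ->
  (forall x, 0 <= x <= B -> `|p.[x] - expR (- x)| <= eta) ->
  exists2 Q : {poly R}, (size Q <= size p)%N &
    (forall t, -1 <= t <= 1 -> `|Q.[t]| <= eta + c) /\
    1 - eta - c <= Q.[(B + s) / (B - s)].
Proof.
move=> /andP [s0 sB] es p0 hp.
pose A : {poly R} := (- ((B - s) / 2))%:P * 'X + ((B + s) / 2)%:P.
have AE t : A.[t] = (B + s) / 2 - (B - s) / 2 * t.
  by rewrite /A hornerMXaddC hornerC; ring.
have sA : size A = 2%N.
  have Bs0 : (B - s) / 2 != 0 by apply/eqP; lra.
  by rewrite size_MXaddC polyC_eq0 oppr_eq0 (negbTE Bs0) /= size_polyC oppr_eq0 Bs0.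
exists ((p - c%:P) \Po A); [|split] => [|t /andP [t1 t2]|].
- rewrite size_comp_poly2 // (leq_trans (size_polyD _ _)) // size_polyN geq_max leqnn.
  exact: leq_trans (size_polyC_leq1 _) p0.
- rewrite horner_comp hornerD hornerN hornerC AE.
  set x := _ - _ * t.
  have xs : s <= x by rewrite /x; nra.
  have xB : x <= B by rewrite /x; nra.
  have := hp x; rewrite xB andbT => /(_ ltac:(lra)).
  have ex0 := expR_gt0 (- x).
  have ex1 : expR (- x) <= 2 * c by rewrite (le_trans _ es) // ler_expR; lra.
  rewrite !ler_norml => /andP [h1 h2]; apply/andP; split; lra.
- rewrite horner_comp hornerD hornerN hornerC AE.
  have -> : (B + s) / 2 - (B - s) / 2 * ((B + s) / (B - s)) = 0 by field; lra.
  have := hp 0; rewrite lexx /= => /(_ (ltW (lt_trans s0 sB))).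
  rewrite oppr0 expR0 ler_norml; lra.
Qed.

Lemma inv_le_of_half_sum_bound (R : realFieldType) (d eta v : R) :
  0 < d < 1 / 4 -> 0 <= eta < d -> 1 <= v ->
  1 - eta - d / 4 <= (eta + d / 4) * ((v + v^-1) / 2) -> d^-1 <= v.
Proof.
move=> /andP [d0 d14] /andP [eta0 etad] v1 hv.
(* v |-> (v + 1/v)/2 increases on [1, oo), and at v = 1/d the hypothesis fails
   because eta + d/4 < 5d/4 < 5/16. *)
rewrite leNgt; apply/negP => vd.
have vd1 : v * d < 1 by rewrite -ltr_pdivlMr // div1r.
have v0 : v != 0 by apply/eqP; lra.
have hv2 : (1 - eta - d / 4) * (2 * v) <= (eta + d / 4) * (v ^+ 2 + 1).
  have -> : (eta + d / 4) * (v ^+ 2 + 1) = (eta + d / 4) * ((v + v^-1) / 2) * (2 * v).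
    by field.
  by rewrite ler_wpM2r //; lra.
have : (v - 1) * (v * d - 1) <= 0 by nra.
nra.
Qed.

Lemma ln_ratio_le (R : realType) (r : R) :
  0 <= r -> r < 1 -> ln ((1 + r) / (1 - r)) <= 2 * r / (1 - r).
Proof.
move=> r0 r1; have -> : (1 + r) / (1 - r) = 1 + 2 * r / (1 - r).
  by field; apply/eqP; lra.
by apply: le_ln1Dx; rewrite (lt_le_trans _ (divr_ge0 _ _)) ?ltrN10 //; lra.
Qed.

Lemma exp_approx_log_lb (R : realType) (B d eta : R) (p : {poly R}) :
  0 < B -> 0 < d < 1 / 4 -> eta < d -> (1 < size p)%N ->
  (forall x, 0 <= x <= B -> `|p.[x] - expR (- x)| <= eta) ->
  Num.sqrt (ln (2 / d) / B) < 1 ->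
  ln d^-1 * (1 - Num.sqrt (ln (2 / d) / B)) <=
    2 * Num.sqrt (ln (2 / d) / B) * ((size p).-1)%:R.
Proof.
move=> B0 /andP [d0 d14] etad sp hp.
set s := ln (2 / d); set r := Num.sqrt (s / B); set n := (size p).-1 => r1.
have s0 : 0 < s by rewrite ln_gt0 // ltr_pdivlMr //; lra.
have r0 : 0 < r by rewrite sqrtr_gt0 divr_gt0.
have rr : r ^+ 2 = s / B by rewrite sqr_sqrtr // divr_ge0 //; lra.
have sB : s < B by rewrite -[s](@divfK _ B) ?gt_eqF // -rr gtr_pMl // expr2; nra.
have es : expR (- s) <= 2 * (d / 4).
  by rewrite expRN lnK ?posrE ?divr_gt0 // invf_div; lra.
have eta0 : 0 <= eta.
  by have := hp 0; rewrite lexx /= => /(_ (ltW B0)); apply: le_trans.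
have [Q sQ [Qbound Qy]] := exp_approx_rescaled (andb_true_intro (conj s0 sB)) es (ltnW sp) hp.
pose u := (1 + r) / (1 - r).
have u1 : 1 <= u by rewrite ler_pdivlMr ?mul1r; lra.
have lnu : ln u <= 2 * r / (1 - r) by apply: ln_ratio_le => //; exact: ltW.
have yE : (B + s) / (B - s) = (u + u^-1) / 2.
  have h1 : B - s != 0 by apply/eqP; lra.
  have h2 : 1 - r != 0 by apply/eqP; lra.
  have h3 : 1 + r != 0 by apply/eqP; lra.
  have sE : s = r ^+ 2 * B by rewrite rr divfK ?gt_eqF.
  by move: h1; rewrite /u sE => h1; field; rewrite h1 h2 h3.
have y1 : 1 <= (B + s) / (B - s) by rewrite ler_pdivlMr ?subr_gt0 //; lra.
have n0 : (0 < n)%N by rewrite /n -subn1 subn_gt0.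
have sQn : (size Q <= n.+1)%N by rewrite /n prednK // ltnW.
have growth := cheb_growth n0 sQn Qbound y1.
have u0 : u != 0 by rewrite gt_eqF // (lt_le_trans ltr01).
rewrite yE horner_cheb_half // in growth.
rewrite yE in Qy.
have un : d^-1 <= u ^+ n.
  apply: (@inv_le_of_half_sum_bound _ d eta); rewrite ?d0 ?d14 ?eta0 ?etad ?exprn_ege1 //.
  exact: le_trans Qy (le_trans (ler_norm _) growth).
have : ln d^-1 <= n%:R * (2 * r / (1 - r)).
  apply: le_trans (_ : _ <= n%:R * ln u) _; last by rewrite ler_wpM2l.
  rewrite mulr_natl -lnXn ?ler_ln ?posrE ?invr_gt0 ?exprn_gt0 //; lra.
by rewrite mulrA ler_pdivlMr ?subr_gt0 // mulrC [X in _ <= X]mulrC.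
Qed.

Lemma ln2_pos_lt_lnV (R : realType) (d : R) :
  0 < d < 1 / 4 -> 0 < ln (2 : R) < ln d^-1.
Proof.
move=> /andP [d0 d4]; rewrite ln_gt0 ?ltr1n //=.
by rewrite ltr_ln ?posrE ?invr_gt0 // -[2]invrK ltf_pV2 ?posrE //; lra.
Qed.

Lemma exp_approx_degree_lb (R : realType) (B d eta : R) (p : {poly R}) :
  0 < B -> 0 < d < 1 / 4 -> eta < d -> (1 < size p)%N ->
  (forall x, 0 <= x <= B -> `|p.[x] - expR (- x)| <= eta) ->
  Num.sqrt (ln (2 / d) / B) < 1 ->
  Num.sqrt (B * ln ((2 * d)^-1)) * (1 - Num.sqrt (ln (2 / d) / B)) <=
    2 * ((size p).-1)%:R.
Proof.
move=> B0 d14 etad sp hp r1; have [d0 d4] := andP d14.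
have := exp_approx_log_lb B0 d14 etad sp hp r1.
set r := Num.sqrt _; set n := ((size p).-1)%:R; set D := ln d^-1 => logD.
have /andP [ln20 D2] := ln2_pos_lt_lnV d14.
have r0 : 0 < r.
  by rewrite sqrtr_gt0 divr_gt0 // ln_gt0 // ltr_pdivlMr //; lra.
have lnE1 : ln (2 / d) = ln 2 + D by rewrite lnM ?posrE ?invr_gt0.
have lnE2 : ln ((2 * d)^-1) = D - ln 2.
  by rewrite invfM lnM ?posrE ?invr_gt0 // lnV ?posrE // addrC.
have ar : Num.sqrt (B * ln ((2 * d)^-1)) * r <= D.
  rewrite /r -sqrtrM ?mulr_ge0 ?lnE2 ?subr_ge0 ?(ltW B0) ?(ltW D2) // lnE1.
  have -> : B * (D - ln 2) * ((ln 2 + D) / B) = D ^+ 2 - ln 2 ^+ 2.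
    by field; rewrite gt_eqF.
  apply: le_trans (ler_wsqrtr (_ : _ <= D ^+ 2)) _.
    by have := sqr_ge0 (ln 2 : R); lra.
  by rewrite sqrtr_sqr ger0_norm // ltW // (lt_trans ln20 D2).
have r1' : 0 <= 1 - r by rewrite subr_ge0 ltW.
by rewrite -(ler_pM2r r0) mulrAC (le_trans (ler_wpM2r r1' ar)) // mulrAC.
Qed.

Lemma log_ratio_sqrt_le (R : realType) (B d rho : R) :
  0 < B -> 0 < d < 1 / 4 -> 0 < rho -> 2 / rho ^+ 2 <= B / ln d^-1 ->
  Num.sqrt (ln (2 / d) / B) <= rho.
Proof.
move=> B0 d14 rho0; have [d0 _] := andP d14.
have /andP [ln20 D2] := ln2_pos_lt_lnV d14.
have lnE : ln (2 / d) = ln 2 + ln d^-1 by rewrite lnM ?posrE ?invr_gt0.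
rewrite ler_pdivrMr ?exprn_gt0 // mulrAC ler_pdivlMr ?(lt_trans ln20 D2) // => hB.
rewrite -(ger0_norm (ltW rho0)) -sqrtr_sqr ler_wsqrtr // ler_pdivrMr // lnE.
by rewrite mulrC; lra.
Qed.

Lemma subrXX_le (R : realDomainType) (a b : R) m :
  0 <= b <= a -> a <= 1 -> a ^+ m - b ^+ m <= m%:R * (a - b).
Proof.
move=> /andP [b0 ba] a1; elim: m => [|m IH]; first by rewrite !expr0 subrr mul0r.
have a0 : 0 <= a := le_trans b0 ba.
have am1 : a ^+ m <= 1 by apply: exprn_ile1.
have -> : a ^+ m.+1 - b ^+ m.+1 = a * (a ^+ m - b ^+ m) + b ^+ m * (a - b).
  by rewrite !exprS; ring.
rewrite -addn1 natrD mulrDl mul1r lerD //.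
  by rewrite (le_trans _ IH) // ler_piMl // subr_ge0 lerXn2r.
by rewrite ler_piMl ?subr_ge0 // exprn_ile1 // (le_trans ba).
Qed.

Lemma expRN_sub_le_sqr (R : realType) (u : R) :
  0 <= u -> expR (- u) - (1 - u) <= u ^+ 2.
Proof.
move=> u0; have e1 := expR_ge1Dx u.
have e2 : expR (- u) * expR u = 1 by rewrite -expRD addNr expR0.
have := expR_gt0 (- u); nra.
Qed.

Lemma exists_exp_approx (R : realType) (B d : R) : 0 < d -> 0 <= B ->
  exists p : {poly R}, (1 < size p)%N /\ approx_on B d (fun x => expR (- x)) p.
Proof.
move=> d0 B0.
have Bd : 0 <= B ^+ 2 / d by rewrite divr_ge0 ?sqr_ge0 ?ltW.
pose m := Num.bound (B + B ^+ 2 / d).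
have hm : B + B ^+ 2 / d < m%:R by apply: archi_boundP; rewrite addr_ge0.
have m0 : (0 : R) < m%:R by rewrite (le_lt_trans _ hm) ?addr_ge0.
pose c : R := (- (m%:R)^-1) ^+ m.
exists (c *: ('X - (m%:R)%:P) ^+ m); split.
  rewrite size_scale ?size_exp_XsubC ?ltnS -?(ltr0n R) //.
  by rewrite expf_neq0 // oppr_eq0 invr_eq0 gt_eqF.
exists (B ^+ 2 / m%:R).
  by rewrite ltr_pdivrMr // mulrC -ltr_pdivrMr //; lra.
move=> x /andP [x0 xB].
rewrite hornerZ horner_exp hornerXsubC /c -exprMn.
have -> : - (m%:R)^-1 * (x - m%:R) = 1 - x / m%:R by field; rewrite gt_eqF.
set u := x / m%:R.
have u0 : 0 <= u by rewrite divr_ge0 ?ler0n.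
have uB : u <= B / m%:R by rewrite ler_pM2r ?invr_gt0.
have u1 : u <= 1 by rewrite ler_pdivrMr // mul1r; lra.
have -> : expR (- x) = expR (- u) ^+ m.
  by rewrite -expRM_natl /u; congr expR; field; rewrite gt_eqF.
have lin_le : 1 - u <= expR (- u) by have := expR_ge1Dx (- u); lra.
rewrite distrC ger0_norm ?subr_ge0 ?lerXn2r ?nnegrE ?subr_ge0 //.
apply: le_trans (subrXX_le _ _ _) _; first by rewrite subr_ge0 u1 lin_le.
  by rewrite expR_le1 oppr_le0.
have -> : B ^+ 2 / m%:R = m%:R * (B / m%:R) ^+ 2 by field; rewrite gt_eqF.
rewrite ler_wpM2l ?ler0n // (le_trans (expRN_sub_le_sqr u0)) //.
by rewrite lerXn2r ?nnegrE ?divr_ge0 ?ler0n.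
Qed.

Lemma le_dmin (R : realType) (B delta : R) (f : R -> R) (m : R) :
  (exists p : {poly R}, (1 < size p)%N /\ approx_on B delta f p) ->
  (forall p : {poly R}, (1 < size p)%N -> approx_on B delta f p ->
     m <= ((size p).-1)%:R) ->
  m <= dmin B delta f.
Proof.
move=> [p [sp fp]] lb; apply: lb_le_inf.
  by exists ((size p).-1)%:R, (size p).-1 => //; exists p.
by move=> _ [n [q [sq [<- fq]]] <-]; apply: lb.
Qed.

Theorem lemma4p6 (R : realType) (B delta : nat -> R)
  (hdelta : forall k, 0 < delta k < 1 / 4)
  (hB : forall k, 1 <= B k)
  (hlim : (fun k => B k / ln ((delta k)^-1)) @ \oo --> +oo) :
  forall eps : R, 0 < eps ->
    \forall k \near \oo,
      (1 / 2 - eps) * Num.sqrt (B k * ln ((2 * delta k)^-1))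
        <= dmin (B k) (delta k) (fun x => expR (- x)).
Proof.
move=> eps eps0.
pose rho := Num.min (2 * eps) (1 / 2).
have rho0 : 0 < rho by rewrite lt_min mulr_gt0 //; lra.
have rho_eps : rho <= 2 * eps by rewrite ge_min lexx.
have rho_half : rho <= 1 / 2 by rewrite ge_min lexx orbT.
have rho1 : rho < 1 by apply: le_lt_trans rho_half _; lra.
move: hlim; rewrite cvgryPge => /(_ (2 / rho ^+ 2)); apply: filterS => k hk.
have [d0 _] := andP (hdelta k); have B0 : 0 < B k by rewrite (lt_le_trans ltr01).
have r_rho := log_ratio_sqrt_le B0 (hdelta k) rho0 hk.
apply: le_dmin => [|p sp [eta etad hp]]; first exact: exists_exp_approx (ltW B0).
have := exp_approx_degree_lb B0 (hdelta k) etad sp hp (le_lt_trans r_rho rho1).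
have a0 := sqrtr_ge0 (B k * ln ((2 * delta k)^-1)).
set a := Num.sqrt _ in a0 *; set r := Num.sqrt _ in r_rho *.
nra.
Qed.
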